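(* Let $(\mathcal{A},\{\mu_n\}_{n\ge1})$ be an $A_\infty$-algebra and $\mathcal{N}:\mathcal{A}\to\mathcal{A}$ a strict homotopy Nijenhuis operator on it. (i) For every $k\ge0$, $\mathcal{N}^k$ is a strict homotopy Nijenhuis operator on $(\mathcal{A},\{\mu_n\}_{n\ge1})$; hence one has the deformed $A_\infty$-algebra $(\mathcal{A},\{\mu_{n,\mathcal{N}^k}\}_{n\ge1})$. (ii) For all $k,l\ge0$, $\mathcal{N}^l$ is a strict homotopy Nijenhuis operator on the deformed $A_\infty$-algebra $(\mathcal{A},\{\mu_{n,\mathcal{N}^k}\}_{n\ge1})$.
   Context: Over a field of characteristic $0$. An $A_\infty$-algebra: graded vector space $\mathcal{A}$ with degree $n-2$ maps $\mu_n:\mathcal{A}^{\otimes n}\to\mathcal{A}$ such that for all $k\ge1$ and homogeneous $a_1,\dots,a_k$: $\sum_{m+n=k+1}\sum_{i=1}^m(-1)^{i(n+1)+n(|a_1|+\cdots+|a_{i-1}|)}\mu_m(a_1,\dots,a_{i-1},\mu_n(a_i,\dots,a_{i+n-1}),a_{i+n},\dots,a_k)=0$. For a degree $0$ linear map $\mathcal{P}$, $S\subseteq\{1,\dots,n\}$ and homogeneous $a_1,\dots,a_n$, write $\mu_n^{S,\mathcal{P}}(a_1,\dots,a_n)=\mu_n(c_1,\dots,c_n)$ with $c_i=a_i$ for $i\in S$, $c_i=\mathcal{P}(a_i)$ for $i\notin S$. $\mathcal{P}$ is a strict homotopy Nijenhuis operator on $(\mathcal{A},\{\mu_n\})$ if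 $\mu_n(\mathcal{P}a_1,\dots,\mathcal{P}a_n)=\sum_{j=1}^n(-1)^{j-1}\mathcal{P}^j\big(\sum_{|S|=j}\mu_n^{S,\mathcal{P}}(a_1,\dots,a_n)\big)$ for all $n\ge1$. The deformed $A_\infty$-algebra of such $\mathcal{P}$ has $\mu_{1,\mathcal{P}}=\mu_1$ and $\mu_{n,\mathcal{P}}(a_1,\dots,a_n)=\sum_{j=1}^n(-1)^{j-1}\mathcal{P}^{j-1}\big(\sum_{|S|=j}\mu_n^{S,\mathcal{P}}(a_1,\dots,a_n)\big)$ for $n\ge2$ (it is an $A_\infty$-algebra). $\mathcal{N}^0=\mathrm{Id}$. *)

From HB Require Import structures.
From mathcomp Require Import all_boot all_order all_algebra.
Set Implicit Arguments. Unset Strict Implicit. Unset Printing Implicit Defensive.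
Import GRing.Theory.
Local Open Scope ring_scope.

(* Conventions:
   - the graded vector space is a K-vector space V together with a predicate
     [h d v] = "v is homogeneous of degree d", where the subspaces
     {v | h d v} form a direct-sum decomposition of V ([is_grading]);
   - the n-ary operation mu_n(a_1,...,a_n) is [mu [:: a_1; ...; a_n]]
     (the arity is the length of the list; the value on [::] is never used);
   - P^j is [iter j P]. *)

Section Defs.
Variables (K : fieldType) (V : lmodType K).

Definition is_grading (h : int -> V -> Prop) : Prop :=
  [/\ (forall d, h d 0),
      (forall d (a : K) (x y : V), h d x -> h d y -> h d (a *: x + y)),
      (forall v : V, exists s : seq (int * V),
          [/\ uniq (map fst s), (forall p, p \in s -> h p.1 p.2)
            & v = \sum_(p <- s) p.2])
    & (forall s : seq (int * V), uniq (map fst s) ->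
          (forall p, p \in s -> h p.1 p.2) ->
          \sum_(p <- s) p.2 = 0 -> forall p, p \in s -> p.2 = 0)].

Definition homog_seq (h : int -> V -> Prop) (a : seq V) (ds : seq int) : Prop :=
  size a = size ds /\ forall j, (j < size a)%N -> h ds`_j a`_j.

Definition multilinear (mu : seq V -> V) : Prop :=
  forall (s : seq V) (i : nat) (c : K) (x y : V), (i < size s)%N ->
    mu (set_nth 0 s i (c *: x + y)) = c *: mu (set_nth 0 s i x) + mu (set_nth 0 s i y).

Definition linear_fun (P : V -> V) : Prop :=
  forall (c : K) (x y : V), P (c *: x + y) = c *: P x + P y.

Definition deg0 (h : int -> V -> Prop) (P : V -> V) : Prop :=
  forall d x, h d x -> h d (P x).

Definition mu_degree (h : int -> V -> Prop) (mu : seq V -> V) : Prop :=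
  forall (a : seq V) (ds : seq int), (1 <= size a)%N -> homog_seq h a ds ->
    h (\sum_(d <- ds) d + (size a)%:Z - 2) (mu a).

(* mu_m(a_1,...,a_{i-1}, mu_n(a_i,...,a_{i+n-1}), a_{i+n},...,a_k) *)
Definition insert_mu (mu : seq V -> V) (a : seq V) (i n : nat) : seq V :=
  take i.-1 a ++ mu (take n (drop i.-1 a)) :: drop (i.-1 + n) a.

Definition ainf_relations (h : int -> V -> Prop) (mu : seq V -> V) : Prop :=
  forall (k : nat) (a : seq V) (ds : seq int), (1 <= k)%N -> size a = k ->
    homog_seq h a ds ->
    \sum_(1 <= n < k.+1) \sum_(1 <= i < (k.+1 - n).+1)
       ((-1) ^ ((i * (n + 1))%:Z + n%:Z * \sum_(j < i.-1) ds`_j)) *: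
          mu (insert_mu mu a i n) = 0.

Definition is_Ainf (h : int -> V -> Prop) (mu : seq V -> V) : Prop :=
  [/\ multilinear mu, mu_degree h mu & ainf_relations h mu].

Definition substS (P : V -> V) (n : nat) (a : seq V) (S : {set 'I_n}) : seq V :=
  [seq (if i \in S then a`_i else P a`_i) | i <- enum 'I_n].

Definition sumS (mu : seq V -> V) (P : V -> V) (a : seq V) (j : nat) : V :=
  \sum_(S : {set 'I_(size a)} | #|S| == j) mu (substS P a S).

Definition strict_homotopy_Nijenhuis (h : int -> V -> Prop) (mu : seq V -> V)
    (P : V -> V) : Prop :=
  [/\ linear_fun P, deg0 h P &
    forall (a : seq V) (ds : seq int), (1 <= size a)%N -> homog_seq h a ds ->
      mu (map P a) =
      \sum_(1 <= j < (size a).+1) ((-1) ^+ j.-1) *: iter j P (sumS mu P a j)].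

Definition deformed (mu : seq V -> V) (P : V -> V) (a : seq V) : V :=
  if (size a <= 1)%N then mu a
  else \sum_(1 <= j < (size a).+1) ((-1) ^+ j.-1) *: iter j.-1 P (sumS mu P a j).

End Defs.

(* Encode the terms of the Nijenhuis identity by monomials: the linear map [eval_poly c]
   sends y^r x_1^e_1 ... x_n^e_n in K[x_1, ..., x_n, y] to P^r mu(P^e_1 c_1, ..., P^e_n c_n).
   The Nijenhuis identity of P at the tuple (P^e_i c_i) says that it kills
   y^r x^e prod_i (x_i - y), hence the whole ideal generated by prod_i (x_i - y), and the
   Nijenhuis identity of P^l is its vanishing on prod_i (x_i^l - y^l), which lies in that ideal.
   For the deformed operations, if R commutes with Q then substituting R and Q commute, so
   the Nijenhuis sum of R for mu_{.,Q} is a combination of Q-iterates of Nijenhuis sums of R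
   for mu, which vanish. *)

From HB Require Import structures.
From mathcomp Require Import all_boot all_order all_algebra.
From mathcomp.multinomials Require Import mpoly.
Set Implicit Arguments. Unset Strict Implicit. Unset Printing Implicit Defensive.
Import GRing.Theory.
Local Open Scope ring_scope.

Section LinearFun.
Variables (K : fieldType) (V : lmodType K) (P : V -> V).
Hypothesis lP : linear_fun P.

Lemma linear_fun0 : P 0 = 0.
Proof. by have := lP 1 0 0; rewrite !scale1r addr0 => /esym/(canRL (addrK _)); rewrite subrr. Qed.

Lemma linear_funD x y : P (x + y) = P x + P y.
Proof. by rewrite -[x]scale1r lP !scale1r. Qed.

Lemma linear_funZ c x : P (c *: x) = c *: P x.
Proof. by rewrite -[c *: x]addr0 lP linear_fun0 addr0. Qed.

Lemma linear_fun_sum (I : Type) (r : seq I) (p : pred I) (F : I -> V) :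
  P (\sum_(i <- r | p i) F i) = \sum_(i <- r | p i) P (F i).
Proof. exact: (big_morph P linear_funD linear_fun0). Qed.

Lemma linear_fun_iter k : linear_fun (iter k P).
Proof. by elim: k => [|k IHk] c x y //=; rewrite IHk lP. Qed.

End LinearFun.

Lemma iter_commute (T : Type) (f g : T -> T) :
  (forall x, f (g x) = g (f x)) -> forall k l x, iter k f (iter l g x) = iter l g (iter k f x).
Proof.
move=> fg; have fgl l x : f (iter l g x) = iter l g (f x).
  by elim: l => //= l IHl; rewrite fg IHl.
by elim=> //= k IHk l x; rewrite IHk fgl.
Qed.

Lemma sum_nonempty_by_card (R : nmodType) (T : finType) (F : nat -> {set T} -> R) :
  \sum_(1 <= j < #|T|.+1) \sum_(S : {set T} | #|S| == j) F j S =
  \sum_(S : {set T} | S != set0) F #|S| S.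
Proof.
rewrite (exchange_big_dep xpredT) //= [RHS]big_mkcond; apply: eq_bigr => S _.
rewrite (eq_bigr (fun _ => F #|S| S)) => [|j /eqP <- //].
rewrite (eq_bigl (fun j => j == #|S|)) => [|j]; last by rewrite eq_sym.
by rewrite big_nat1_eq -card_gt0 ltnS max_card andbT.
Qed.

Section Substitution.
Variables (K : fieldType) (V : lmodType K) (h : int -> V -> Prop).

Lemma nth_map_enum_ord n (F : 'I_n -> V) (i : 'I_n) : [seq F j | j <- enum 'I_n]`_i = F i.
Proof. by rewrite (nth_map i) ?size_enum_ord // nth_ord_enum. Qed.

Lemma map_enum_ord_nth (c : seq V) : [seq c`_i | i : 'I_(size c) <- enum 'I_(size c)] = c.
Proof. by rewrite (map_comp (nth 0 c) val) val_enum_ord -/(mkseq _ _) mkseq_nth. Qed.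

Lemma homog_seq_enum_ord n (F : 'I_n -> V) (ds : seq int) :
  size ds = n -> (forall i : 'I_n, h ds`_i (F i)) -> homog_seq h [seq F i | i <- enum 'I_n] ds.
Proof.
move=> sds hF; rewrite /homog_seq size_map size_enum_ord sds; split=> // j jn.
by rewrite -[j]/(nat_of_ord (Ordinal jn)) nth_map_enum_ord.
Qed.

Lemma size_substS (P : V -> V) n (c : seq V) (S : {set 'I_n}) : size (substS P c S) = n.
Proof. by rewrite size_map size_enum_ord. Qed.

Lemma nth_substS (P : V -> V) n (c : seq V) (S : {set 'I_n}) (i : 'I_n) :
  (substS P c S)`_i = if i \in S then c`_i else P c`_i.
Proof. exact: nth_map_enum_ord. Qed.

Lemma substS0 (P : V -> V) (c : seq V) : substS P c (set0 : {set 'I_(size c)}) = map P c.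
Proof.
rewrite /substS; under eq_map => i do rewrite in_set0.
by rewrite -[in RHS](map_enum_ord_nth c) -[in RHS]map_comp.
Qed.

Lemma substST (P : V -> V) n (c : seq V) : size c = n -> substS P c [set: 'I_n] = c.
Proof.
move=> <-; rewrite /substS; under eq_map => i do rewrite in_setT.
exact: map_enum_ord_nth.
Qed.

Lemma substS_comm (Q R : V -> V) n (c : seq V) (S J : {set 'I_n}) :
  (forall x, Q (R x) = R (Q x)) -> substS Q (substS R c J) S = substS R (substS Q c S) J.
Proof.
move=> QR; apply: eq_map => i; rewrite !nth_substS.
by case: (i \in S); case: (i \in J).
Qed.

Lemma homog_substS (P : V -> V) n (c : seq V) (S : {set 'I_n}) ds :
  deg0 h P -> size c = n -> homog_seq h c ds -> homog_seq h (substS P c S) ds.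
Proof.
move=> dP sc [scd hc]; apply: homog_seq_enum_ord => [|i]; first by rewrite -scd.
by case: (i \in S); [|apply: dP]; apply: hc; rewrite sc.
Qed.

Lemma deg0_iter (P : V -> V) k : deg0 h P -> deg0 h (iter k P).
Proof. by move=> dP; elim: k => [|k IHk] d x hx //=; apply/dP/IHk. Qed.

Definition nijenhuis_sum (mu : seq V -> V) (P : V -> V) n (c : seq V) : V :=
  \sum_(S : {set 'I_n}) (-1) ^+ #|S| *: iter #|S| P (mu (substS P c S)).

Lemma nijenhuis_sumE mu (P : V -> V) (c : seq V) : linear_fun P ->
  nijenhuis_sum mu P (size c) c =
  mu (map P c) - \sum_(1 <= j < (size c).+1) (-1) ^+ j.-1 *: iter j P (sumS mu P c j).
Proof.
move=> lP; rewrite /nijenhuis_sum (bigD1 set0) //= cards0 expr0 scale1r substS0.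
congr (_ + _); rewrite /sumS.
under [in RHS]eq_bigr do rewrite (linear_fun_sum (linear_fun_iter lP _)) scaler_sumr.
have := sum_nonempty_by_card
  (fun j (S : {set 'I_(size c)}) => (-1) ^+ j.-1 *: iter j P (mu (substS P c S))).
rewrite card_ord => ->; rewrite -sumrN; apply: eq_bigr => S.
by rewrite -card_gt0; case: #|S| => // m _; rewrite exprS mulN1r scaleNr.
Qed.

Lemma strict_homotopy_Nijenhuis_sumP mu (P : V -> V) : linear_fun P -> deg0 h P ->
  strict_homotopy_Nijenhuis h mu P <->
  (forall n c ds, (0 < n)%N -> size c = n -> homog_seq h c ds -> nijenhuis_sum mu P n c = 0).
Proof.
move=> lP dP; split=> [[_ _ NP] n c ds n0 sc hc | NP].
  by rewrite -sc nijenhuis_sumE // (NP c ds) ?sc // subrr.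
split=> // a ds a1 ha; apply/eqP; rewrite -subr_eq0 -nijenhuis_sumE //.
exact/eqP/(NP _ _ ds).
Qed.

Lemma deformed_substE mu (Q : V -> V) n (c : seq V) :
  linear_fun Q -> (0 < n)%N -> size c = n ->
  deformed mu Q c = \sum_(S : {set 'I_n} | S != set0)
    (-1) ^+ #|S|.-1 *: iter #|S|.-1 Q (mu (substS Q c S)).
Proof.
move=> lQ n0 sc; rewrite /deformed; case: leqP => [c1 | c2].
  have n1 : n = 1%N by apply/anti_leq; rewrite -{1}sc c1.
  move: sc; rewrite n1 => sc; rewrite (big_pred1 setT) => [|S]; last first.
    by rewrite /= -card_gt0 eqEcard subsetT cardsT card_ord.
  by rewrite cardsT card_ord expr0 scale1r substST.
subst n.
rewrite /sumS; under eq_bigr do rewrite (linear_fun_sum (linear_fun_iter lQ _)) scaler_sumr.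
have := sum_nonempty_by_card
  (fun j (S : {set 'I_(size c)}) => (-1) ^+ j.-1 *: iter j.-1 Q (mu (substS Q c S))).
by rewrite card_ord.
Qed.

Lemma nijenhuis_sum_deformed mu (Q R : V -> V) n (c : seq V) :
  linear_fun Q -> linear_fun R -> (forall x, Q (R x) = R (Q x)) -> (0 < n)%N ->
  nijenhuis_sum (deformed mu Q) R n c =
  \sum_(S : {set 'I_n} | S != set0)
    (-1) ^+ #|S|.-1 *: iter #|S|.-1 Q (nijenhuis_sum mu R n (substS Q c S)).
Proof.
move=> lQ lR QR n0; rewrite /nijenhuis_sum.
under eq_bigr => J _ do rewrite (deformed_substE _ lQ n0 (size_substS _ _ _))
  (linear_fun_sum (linear_fun_iter lR _)) scaler_sumr.
under [RHS]eq_bigr => S _ do rewrite (linear_fun_sum (linear_fun_iter lQ _)) scaler_sumr.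
rewrite exchange_big; apply: eq_bigr => S _; apply: eq_bigr => J _.
rewrite (linear_funZ (linear_fun_iter lR _)) (linear_funZ (linear_fun_iter lQ _)).
by rewrite !scalerA mulrC substS_comm // iter_commute.
Qed.

Theorem strict_homotopy_Nijenhuis_deformed mu (Q R : V -> V) :
  linear_fun Q -> deg0 h Q -> (forall x, Q (R x) = R (Q x)) ->
  strict_homotopy_Nijenhuis h mu R -> strict_homotopy_Nijenhuis h (deformed mu Q) R.
Proof.
move=> lQ dQ QR NR; have [lR dR _] := NR.
have /(strict_homotopy_Nijenhuis_sumP _ lR dR) NRsum := NR.
apply/strict_homotopy_Nijenhuis_sumP => // n c ds n0 sc hc.
rewrite nijenhuis_sum_deformed // big1 // => S _.
rewrite (NRsum n _ ds n0 (size_substS _ _ _) (homog_substS _ dQ sc hc)).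
by rewrite linear_fun0 ?scaler0 //; exact: linear_fun_iter.
Qed.

End Substitution.

Section PolynomialModel.
Variables (K : fieldType) (V : lmodType K) (h : int -> V -> Prop).
Variables (mu : seq V -> V) (P : V -> V) (n : nat).

(* The variables of K[x_1, ..., x_n, y] are x_i = xvar i and y = ord_max. *)
Definition xvar (i : 'I_n) : 'I_n.+1 := lift ord_max i.

Lemma xvar_max (i : 'I_n) : (xvar i == ord_max) = false.
Proof. by rewrite eq_sym (negbTE (neq_lift _ _)). Qed.

Definition iter_args (m : 'X_{1..n.+1}) (c : seq V) : seq V :=
  [seq iter (m (xvar i)) P c`_i | i <- enum 'I_n].

Definition eval_monomial (c : seq V) (m : 'X_{1..n.+1}) : V :=
  iter (m ord_max) P (mu (iter_args m c)).

Definition eval_poly (c : seq V) (p : {mpoly K[n.+1]}) : V :=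
  \sum_(m <- msupp p) p@_m *: eval_monomial c m.

Lemma eval_poly_over c p (s : seq 'X_{1..n.+1}) : uniq s -> {subset msupp p <= s} ->
  eval_poly c p = \sum_(m <- s) p@_m *: eval_monomial c m.
Proof.
move=> us sub; rewrite /eval_poly [RHS](bigID (mem (msupp p))) /=.
rewrite [X in _ = _ + X]big1 ?addr0 => [|m /memN_msupp_eq0 ->]; last exact: scale0r.
rewrite -[in RHS]big_filter; apply/perm_big/uniq_perm; rewrite ?filter_uniq // => m.
by rewrite mem_filter andb_idr //; apply: sub.
Qed.

Lemma eval_poly_is_linear c : linear (eval_poly c).
Proof.
move=> a p q; pose s := undup (msupp p ++ msupp q ++ msupp (a *: p + q)).
rewrite !(@eval_poly_over c _ s) ?undup_uniq //.
2-4: by move=> m hm; rewrite mem_undup !mem_cat hm ?orbT.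
rewrite scaler_sumr -big_split; apply: eq_bigr => m _.
by rewrite mcoeffD mcoeffZ scalerDl scalerA.
Qed.

HB.instance Definition _ c := GRing.isLinear.Build K {mpoly K[n.+1]} V *:%R
  (eval_poly c) (eval_poly_is_linear c).

Lemma eval_polyX c m : eval_poly c 'X_[m] = eval_monomial c m.
Proof. by rewrite /eval_poly msuppX big_seq1 mcoeffX eqxx scale1r. Qed.

Lemma size_iter_args m c : size (iter_args m c) = n.
Proof. by rewrite size_map size_enum_ord. Qed.

Lemma eval_poly_mulX c m q : linear_fun P ->
  eval_poly c ('X_[m] * q) = iter (m ord_max) P (eval_poly (iter_args m c) q).
Proof.
move=> lP; rewrite [q]mpolyE mulr_sumr !linear_sum (linear_fun_sum (linear_fun_iter lP _)).
apply: eq_bigr => m' _; rewrite -scalerAr !linearZ /= (linear_funZ (linear_fun_iter lP _)).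
rewrite -mpolyXD !eval_polyX /eval_monomial mnmDE iterD; congr (_ *: iter _ P (iter _ P (mu _))).
apply: eq_map => i; rewrite nth_map_enum_ord mnmDE.
by rewrite addnC iterD.
Qed.

Definition subset_monomial (S : {set 'I_n}) l : 'X_{1..n.+1} :=
  (\sum_(i < n) U_(if i \in S then ord_max else xvar i) *+ l)%MM.

Lemma subset_monomial_max S l : subset_monomial S l ord_max = (#|S| * l)%N.
Proof.
rewrite mnm_sumE (eq_bigr (fun i => if i \in S then l else 0%N)) => [|i _].
  by rewrite -big_mkcond sum_nat_const.
by rewrite mulmnE mnm1E; case: (i \in S); rewrite ?eqxx ?xvar_max ?mul1n.
Qed.

Lemma subset_monomial_xvar S l j : subset_monomial S l (xvar j) = if j \in S then 0%N else l.
Proof.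
rewrite mnm_sumE (bigD1 j) //= big1 => [|i ij]; rewrite mulmnE mnm1E.
  by case: (j \in S); rewrite 1?eq_sym ?xvar_max ?eqxx ?mul0n ?mul1n ?addn0.
case: (i \in S); first by rewrite eq_sym xvar_max mul0n.
by rewrite (inj_eq lift_inj) (negbTE ij) mul0n.
Qed.

Lemma prod_pow_sub_expand l :
  \prod_(i < n) ('X_(xvar i) ^+ l - 'X_ord_max ^+ l : {mpoly K[n.+1]}) =
  \sum_(S : {set 'I_n}) (-1) ^+ #|S| *: 'X_[subset_monomial S l].
Proof.
under eq_bigr do rewrite addrC.
rewrite bigA_distr; apply: eq_bigr => S _.
rewrite (big_morph _ (@mpolyXD _ _) (mpolyX0 _ _)).
rewrite (eq_bigr (fun i => (-1) ^+ (i \in S) *: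
    'X_[U_(if i \in S then ord_max else xvar i) *+ l])) => [|i _]; last first.
  by case: (i \in S); rewrite -mpolyXn ?expr1 ?scaleN1r ?expr0 ?scale1r.
rewrite scaler_prod (eq_bigr (fun i => if i \in S then -1 else 1)) => [|i _].
  by rewrite -big_mkcond prodr_const.
by case: (i \in S).
Qed.

Lemma eval_poly_prod_pow_sub c l :
  eval_poly c (\prod_(i < n) ('X_(xvar i) ^+ l - 'X_ord_max ^+ l)) =
  nijenhuis_sum mu (iter l P) n c.
Proof.
rewrite prod_pow_sub_expand linear_sum; apply: eq_bigr => S _.
rewrite linearZ /= eval_polyX /eval_monomial subset_monomial_max iterM.
congr (_ *: iter _ _ (mu _)); apply: eq_map => i.
by rewrite subset_monomial_xvar; case: (i \in S).
Qed.

Lemma homog_iter_args m c ds :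
  deg0 h P -> size c = n -> homog_seq h c ds -> homog_seq h (iter_args m c) ds.
Proof.
move=> dP sc [scd hc]; apply: homog_seq_enum_ord => [|i]; first by rewrite -scd.
by apply: deg0_iter dP _ _ _; apply: hc; rewrite sc.
Qed.

Hypothesis NP : strict_homotopy_Nijenhuis h mu P.

Lemma eval_poly_prod_sub_ideal c ds q : (0 < n)%N -> size c = n -> homog_seq h c ds ->
  eval_poly c (\prod_(i < n) ('X_(xvar i) - 'X_ord_max) * q) = 0.
Proof.
move=> n0 sc hc; have [lP dP _] := NP.
have /(strict_homotopy_Nijenhuis_sumP _ lP dP) NPsum := NP.
rewrite [q]mpolyE mulr_sumr linear_sum big1 // => m _.
(* 'X_i ^+ 1 and iter 1 P are convertible to 'X_i and P. *)
rewrite -scalerAr linearZ /= mulrC (eval_poly_mulX _ _ _ lP) (eval_poly_prod_pow_sub _ 1).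
rewrite (NPsum n _ ds n0 (size_iter_args _ _) (homog_iter_args _ dP sc hc)).
by rewrite linear_fun0 ?scaler0 //; exact: linear_fun_iter.
Qed.

Lemma eval_poly_prod_pow_sub_ideal c ds l q : (0 < n)%N -> size c = n -> homog_seq h c ds ->
  eval_poly c (\prod_(i < n) ('X_(xvar i) ^+ l - 'X_ord_max ^+ l) * q) = 0.
Proof.
move=> n0 sc hc; under eq_bigr do rewrite subrXX.
by rewrite big_split /= -mulrA (eval_poly_prod_sub_ideal _ n0 sc hc).
Qed.

End PolynomialModel.

Theorem strict_homotopy_Nijenhuis_iter (K : fieldType) (V : lmodType K) h mu (P : V -> V) k :
  strict_homotopy_Nijenhuis h mu P -> strict_homotopy_Nijenhuis h mu (iter k P).
Proof.
move=> NP; have [lP dP _] := NP.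
apply/strict_homotopy_Nijenhuis_sumP => [||n c ds n0 sc hc].
- exact: linear_fun_iter.
- exact: deg0_iter.
rewrite -eval_poly_prod_pow_sub -[\prod_(i < n) _]mulr1.
exact: (eval_poly_prod_pow_sub_ideal NP _ _ n0 sc hc).
Qed.

Theorem theorem6p15 (K : fieldType) (V : lmodType K) (h : int -> V -> Prop)
    (mu : seq V -> V) (N : V -> V) :
  [pchar K] =i pred0 -> is_grading h -> is_Ainf h mu ->
  strict_homotopy_Nijenhuis h mu N ->
  (forall k : nat, strict_homotopy_Nijenhuis h mu (iter k N)) /\
  (forall k l : nat, strict_homotopy_Nijenhuis h (deformed mu (iter k N)) (iter l N)).
Proof.
move=> _ _ _ NN; have [lN dN _] := NN.
split=> [k | k l]; first exact: strict_homotopy_Nijenhuis_iter.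
apply: strict_homotopy_Nijenhuis_deformed.
- exact: linear_fun_iter.
- exact: deg0_iter.
- by move=> x; rewrite -!iterD addnC.
- exact: strict_homotopy_Nijenhuis_iter.
Qed.
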